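(* For no $\lambda\in\mathbb{C}$ does the equation $-w''(x)+P(x)w(x)=\lambda w(x)$ on $(0,\infty)$ have a nonzero solution $w\in L^2(0,\infty)$. In particular the self-adjoint operator $A=-\frac{d^2}{dx^2}+P(x)$ on $L^2(0,\infty)$, with domain $\{w\in L^2(0,\infty): w,w'\text{ locally absolutely continuous},\ Aw\in L^2(0,\infty)\}$, has no eigenvalues.
   Context: $P(x)=\dfrac{e^{4x}+10e^{2x}+1}{4(e^{2x}-1)^2}$ for $x>0$. *)

From Stdlib Require Import Reals.
Open Scope R_scope.

Definition P (x : R) : R :=
  (exp (4 * x) + 10 * exp (2 * x) + 1) / (4 * (exp (2 * x) - 1) ^ 2).

(* A complex-valued function w = u + i v on (0,oo) is represented by its real
   and imaginary parts u, v : R -> R (values outside (0,oo) are irrelevant).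
   For a continuous w, w ∈ L^2(0,oo) iff the Riemann integrals of |w|^2 over
   all compact subintervals [lo,hi] of (0,oo) are uniformly bounded. *)
Definition L2_pos (u v : R -> R) : Prop :=
  exists M : R, forall (lo hi : R)
    (pr : Riemann_integrable (fun x => u x ^ 2 + v x ^ 2) lo hi),
    0 < lo -> lo <= hi -> RiemannInt pr <= M.

From Stdlib Require Import Reals Lra Psatz Classical.
From Coquelicot Require Import Coquelicot.
Open Scope R_scope.

(* Write w = u + i v and lambda = a + i b. Since P = 1/4 + 3 / (4 sinh^2 x), the
   function y = sinh^(-1/2) solves -y'' + P y = 0, and G = w / y, M = y w' - y' w
   satisfy G' = sinh * M and M' = - lambda G / sinh. Near 0 this first-order system
   and the square integrability of w force G = O(x^2) and M = O(1), so that the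
   current J = Im (conj w * w') and, for real lambda, the energy
   E = |w'|^2 + (lambda - P) |w|^2 are O(x). Since (b J)' = -b^2 |w|^2 and, for
   b = 0, E' = -P' |w|^2 >= 0, it follows that b J <= 0 and E >= 0. If b J < 0 or
   E > 0 somewhere, then from there on (|w|^2)'' is bounded below by a positive
   constant minus a multiple of |w|^2; this makes |w|^2 grow at least linearly,
   contradicting square integrability. Hence b J, resp. E, vanishes identically,
   and so does its derivative, a nonzero multiple of |w|^2. *)

Lemma le_of_derive_nonneg (f df : R -> R) p q : p <= q ->
  (forall t, p <= t <= q -> is_derive f t (df t)) ->
  (forall t, p <= t <= q -> 0 <= df t) -> f p <= f q.
Proof.
intros Hpq Hd Hnn. destruct (Req_dec p q) as [->|Hne]; [lra|].
destruct (MVT_cor2 f df p q) as [c [Hc1 Hc2]]; [lra| |].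
- intros c Hc. apply is_derive_Reals, Hd; lra.
- assert (0 <= df c) by (apply Hnn; lra). nra.
Qed.

Lemma Rabs_sub_le_of_derive (f df h dh : R -> R) p q : p <= q ->
  (forall t, p <= t <= q ->
     is_derive f t (df t) /\ is_derive h t (dh t) /\ Rabs (df t) <= dh t) ->
  Rabs (f q - f p) <= h q - h p.
Proof.
intros Hpq H. apply Rabs_le.
assert (h p - f p <= h q - f q).
{ apply (le_of_derive_nonneg (fun t => h t - f t) (fun t => dh t - df t)); [lra| |].
  - intros t Ht. destruct (H t Ht) as (Hf & Hh & _). now apply (is_derive_minus h f).
  - intros t Ht. destruct (H t Ht) as (_ & _ & Hb). apply Rabs_le_between in Hb. lra. }
assert (h p + f p <= h q + f q).
{ apply (le_of_derive_nonneg (fun t => h t + f t) (fun t => dh t + df t)); [lra| |].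
  - intros t Ht. destruct (H t Ht) as (Hf & Hh & _). now apply (is_derive_plus h f).
  - intros t Ht. destruct (H t Ht) as (_ & _ & Hb). apply Rabs_le_between in Hb. lra. }
lra.
Qed.

Lemma Rabs_le_of_derive_from_0 (f df h dh : R -> R) x :
  (forall d, 0 < d -> exists x', 0 < x' <= x /\ Rabs (f x') <= d) ->
  (forall t, 0 < t <= x ->
     is_derive f t (df t) /\ is_derive h t (dh t) /\ Rabs (df t) <= dh t /\ 0 <= h t) ->
  Rabs (f x) <= h x.
Proof.
intros Hsmall H. apply Rle_plus_epsilon. intros e He.
destruct (Hsmall e He) as [x' [Hx' Hfx']].
assert (Hlip : Rabs (f x - f x') <= h x - h x').
{ apply (Rabs_sub_le_of_derive f df h dh); [lra|].
  intros t Ht. destruct (H t ltac:(lra)) as (? & ? & ? & _). auto. }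
destruct (H x' Hx') as (_ & _ & _ & Hh).
pose proof (Rabs_triang (f x - f x') (f x')). replace (f x - f x' + f x') with (f x) in * by ring.
lra.
Qed.

Lemma Derive_eta (f : R -> R) x l : is_derive f x l -> Derive (fun t => f t) x = l.
Proof. apply is_derive_unique. Qed.

Ltac auto_derive_hyps :=
  auto_derive;
  repeat match goal with
  | |- _ /\ _ => split
  | |- True => exact I
  | H : is_derive ?f ?x ?l |- ex_derive _ ?x => exists l; exact H
  | H : is_derive ?f ?x ?l |- _ => progress rewrite (Derive_eta f x l H)
  end.

Lemma le_add_mul_of_derive_ge (f df : R -> R) c p q : p <= q ->
  (forall t, p <= t <= q -> is_derive f t (df t)) ->
  (forall t, p <= t <= q -> c <= df t) -> f p + c * (q - p) <= f q.
Proof.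
intros Hpq Hd Hc.
assert (f p - c * p <= f q - c * q); [|lra].
apply (le_of_derive_nonneg (fun t => f t - c * t) (fun t => df t - c)); [lra| |].
- intros t Ht. specialize (Hd t Ht). auto_derive_hyps. ring.
- intros t Ht. specialize (Hc t Ht). lra.
Qed.

Lemma near_pos x : 0 < x -> locally x (fun y => 0 < y).
Proof.
intros Hx. exists (mkposreal x Hx). intros y Hy.
apply Rabs_lt_between in Hy. unfold minus, plus, opp in Hy; simpl in Hy. lra.
Qed.

Lemma is_derive_RInt_pos (f : R -> R) p t : 0 < p -> 0 < t ->
  (forall y, 0 < y -> continuous f y) -> is_derive (fun X => RInt f p X) t (f t).
Proof.
intros Hp Ht Hc. apply (is_derive_RInt f _ p); [|now apply Hc].
assert (Hr : 0 < Rmin p t / 2) by (apply Rmin_case; lra).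
exists (mkposreal _ Hr). intros y Hy. apply (@RInt_correct R_CompleteNormedModule).
apply ex_RInt_continuous. intros z Hz. apply Hc.
apply Rabs_lt_between in Hy. unfold minus, plus, opp in Hy; simpl in Hy.
pose proof (Rmin_l p t). pose proof (Rmin_r p t).
revert Hz. unfold Rmin, Rmax. destruct (Rle_dec p y); lra.
Qed.

Lemma derive_eq_0_of_vanishing (f : R -> R) x l : 0 < x ->
  (forall y, 0 < y -> f y = 0) -> is_derive f x l -> l = 0.
Proof.
intros Hx Hf Hd.
assert (H0 : is_derive (fun _ : R => 0) x l).
{ apply (is_derive_ext_loc f); [|exact Hd].
  apply (filter_imp (fun y => 0 < y)); [|now apply near_pos]. intros y Hy. now apply Hf. }
rewrite <- (is_derive_unique _ _ _ H0). apply Derive_const.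
Qed.

Lemma RInt_unbounded_of_eventually_ge_1 (r : R -> R) x1 X0 M : 0 < x1 <= X0 ->
  (forall y, 0 < y -> continuous r y) ->
  (forall t, x1 <= t -> 0 <= r t) -> (forall t, X0 <= t -> 1 <= r t) ->
  ~ (forall X, x1 <= X -> RInt r x1 X <= M).
Proof.
intros Hx Hc Hnn Hge HM.
set (I := fun X => RInt r x1 X).
assert (HI : forall t, x1 <= t -> is_derive I t (r t))
  by (intros t Ht; apply is_derive_RInt_pos; auto; lra).
set (T := X0 + Rabs M + 1).
assert (I x1 + 0 * (X0 - x1) <= I X0)
  by (apply (le_add_mul_of_derive_ge I r); [lra|intros; apply HI|intros; apply Hnn]; lra).
assert (I X0 + 1 * (T - X0) <= I T)
  by (unfold T; pose proof (Rabs_pos M);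
      apply (le_add_mul_of_derive_ge I r); [lra|intros; apply HI|intros; apply Hge]; lra).
assert (I x1 = 0) by (unfold I; now rewrite RInt_point).
assert (I T <= M) by (apply HM; unfold T; pose proof (Rabs_pos M); lra).
pose proof (Rle_abs M). unfold T in *. lra.
Qed.

Lemma RInt_unbounded_of_D2_ge (r dr d2r : R -> R) x1 e K M : 0 < x1 -> 0 < e -> 0 <= K ->
  (forall y, 0 < y -> continuous r y) ->
  (forall t, x1 <= t ->
     is_derive r t (dr t) /\ is_derive dr t (d2r t) /\ 0 <= r t /\ e - K * r t <= d2r t) ->
  ~ (forall X, x1 <= X -> RInt r x1 X <= M).
Proof.
intros Hx1 He HK Hc Hd HM.
set (I := fun X => RInt r x1 X).
assert (HI : forall t, x1 <= t -> is_derive I t (r t))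
  by (intros t Ht; apply is_derive_RInt_pos; auto; lra).
assert (HI0 : I x1 = 0) by (unfold I; now rewrite RInt_point).
assert (HIM : forall X, x1 <= X -> I X <= M) by exact HM. clearbody I.
assert (Hdr : forall X, x1 <= X -> dr x1 + e * (X - x1) - K * M <= dr X).
{ intros X HX.
  assert (dr x1 - e * x1 + K * I x1 + 0 * (X - x1) <= dr X - e * X + K * I X).
  { apply (le_add_mul_of_derive_ge (fun t => dr t - e * t + K * I t)
                                   (fun t => d2r t - e + K * r t)); [lra| |].
    - intros t Ht. destruct (Hd t (proj1 Ht)) as (_ & Hdr & _).
      pose proof (HI t (proj1 Ht)). auto_derive_hyps. ring.
    - intros t Ht. destruct (Hd t (proj1 Ht)) as (_ & _ & _ & Hb). lra. }
  assert (K * I X <= K * M) by (apply Rmult_le_compat_l; auto; apply HIM; lra).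
  rewrite HI0 in *. lra. }
set (X0 := x1 + (Rabs (dr x1) + K * Rabs M + 1) / e).
assert (HX0 : x1 <= X0).
{ assert (0 <= (Rabs (dr x1) + K * Rabs M + 1) / e); [|unfold X0; lra].
  apply Rlt_le, Rdiv_lt_0_compat; [|lra].
  pose proof (Rabs_pos (dr x1)); pose proof (Rabs_pos M). nra. }
assert (Hdr1 : forall X, X0 <= X -> 1 <= dr X).
{ intros X HX. pose proof (Hdr X ltac:(lra)).
  assert (e * (X0 - x1) = Rabs (dr x1) + K * Rabs M + 1) by (unfold X0; field; lra).
  assert (e * (X0 - x1) <= e * (X - x1)) by (apply Rmult_le_compat_l; lra).
  pose proof (Rle_abs (- dr x1)). rewrite Rabs_Ropp in *.
  assert (K * M <= K * Rabs M) by (apply Rmult_le_compat_l; auto; apply Rle_abs).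
  lra. }
apply (RInt_unbounded_of_eventually_ge_1 r x1 (X0 + 1) M); [lra|exact Hc| | |exact HM].
- intros t Ht. now apply Hd.
- intros t Ht.
  assert (r X0 + 1 * (t - X0) <= r t).
  { apply (le_add_mul_of_derive_ge r dr); [lra| |].
    - intros s Hs. apply Hd; lra.
    - intros s Hs. apply Hdr1; lra. }
  destruct (Hd X0 HX0) as (_ & _ & ? & _). lra.
Qed.

Lemma Rabs_le_of_sqr_le A B : 0 <= B -> A ^ 2 <= B ^ 2 -> Rabs A <= B.
Proof. intros. apply Rabs_le_between. split; nra. Qed.

Lemma sqr_le_of_Rabs_le A B : Rabs A <= B -> A ^ 2 <= B ^ 2.
Proof. intros H. rewrite <- (pow2_abs A). pose proof (Rabs_pos A). apply pow_incr. lra. Qed.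

(* [Re (conj m * (a + i b) g) <= |m| |a + i b| |g|], and [|g| <= (1 + |g|^2) / 2]. *)
Lemma Rabs_dot_cmul_le m1 m2 a b g1 g2 :
  Rabs (m1 * (a * g1 - b * g2) + m2 * (a * g2 + b * g1))
  <= sqrt (m1 ^ 2 + m2 ^ 2 + 1) * (Rabs a + Rabs b) * ((1 + g1 ^ 2 + g2 ^ 2) / 2).
Proof.
set (mu := sqrt (m1 ^ 2 + m2 ^ 2 + 1)).
assert (Hmu : mu ^ 2 = m1 ^ 2 + m2 ^ 2 + 1)
  by (unfold mu; rewrite <- Rsqr_pow2; apply Rsqr_sqrt; nra).
assert (Hmu0 : 0 <= mu) by apply sqrt_pos.
assert (HL : a ^ 2 + b ^ 2 <= (Rabs a + Rabs b) ^ 2).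
{ rewrite <- (pow2_abs a), <- (pow2_abs b). pose proof (Rabs_pos a). pose proof (Rabs_pos b). nra. }
assert (Hg : g1 ^ 2 + g2 ^ 2 <= ((1 + g1 ^ 2 + g2 ^ 2) / 2) ^ 2)
  by (pose proof (pow2_ge_0 (1 - g1 ^ 2 - g2 ^ 2)); nra).
set (N := m1 * (a * g1 - b * g2) + m2 * (a * g2 + b * g1)).
assert (Hlag : N ^ 2 <= (m1 ^ 2 + m2 ^ 2) * ((a ^ 2 + b ^ 2) * (g1 ^ 2 + g2 ^ 2))).
{ pose proof (pow2_ge_0 (m1 * (a * g2 + b * g1) - m2 * (a * g1 - b * g2))). unfold N. nra. }
apply Rabs_le_of_sqr_le.
- pose proof (Rabs_pos a). pose proof (Rabs_pos b).
  assert (0 <= (1 + g1 ^ 2 + g2 ^ 2) / 2) by nra. apply Rmult_le_pos; [|lra]. nra.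
- replace ((mu * (Rabs a + Rabs b) * ((1 + g1 ^ 2 + g2 ^ 2) / 2)) ^ 2)
    with (mu ^ 2 * ((Rabs a + Rabs b) ^ 2 * ((1 + g1 ^ 2 + g2 ^ 2) / 2) ^ 2)) by ring.
  apply (Rle_trans _ _ _ Hlag). apply Rmult_le_compat; try nra.
Qed.

Lemma nonpos_of_nonincreasing_O (f : R -> R) K :
  (forall p q, 0 < p <= q -> f q <= f p) ->
  (forall x, 0 < x <= /2 -> Rabs (f x) <= K * x) ->
  forall x, 0 < x -> f x <= 0.
Proof.
intros Hmon HO x Hx. apply Rle_plus_epsilon. intros e He.
set (K' := Rabs K + 1).
set (y := Rmin x (Rmin (/2) (e / K'))).
assert (HK' : 0 < K') by (unfold K'; pose proof (Rabs_pos K); lra).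
assert (Hy : 0 < y) by (unfold y; repeat apply Rmin_case; try lra; now apply Rdiv_lt_0_compat).
assert (Hyx : y <= x) by apply Rmin_l.
assert (Hy2 : y <= /2) by (eapply Rle_trans; [apply Rmin_r|apply Rmin_l]).
assert (Hye : K' * y <= e).
{ assert (Hy' : y <= e / K') by (eapply Rle_trans; [apply Rmin_r|apply Rmin_r]).
  apply (Rmult_le_compat_l K') in Hy'; [|lra].
  replace (K' * (e / K')) with e in Hy' by (field; lra). lra. }
specialize (Hmon y x (conj Hy Hyx)). specialize (HO y (conj Hy Hy2)).
apply Rabs_le_between in HO.
assert (K * y <= K' * y)
  by (apply Rmult_le_compat_r; [lra|]; unfold K'; pose proof (Rle_abs K); lra).
lra.
Qed.

Lemma Rabs_lincomb_div_le p q g1 g2 c t s : 0 < t <= s ->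
  Rabs g1 <= c * t -> Rabs g2 <= c * t -> Rabs ((p * g1 + q * g2) / s) <= (Rabs p + Rabs q) * c.
Proof.
intros Hts H1 H2.
assert (Hc : 0 <= c) by (pose proof (Rabs_pos g1); nra).
unfold Rdiv. rewrite Rabs_mult, (Rabs_pos_eq (/ s)) by (left; apply Rinv_0_lt_compat; lra).
apply (Rmult_le_reg_r s); [lra|]. rewrite Rmult_assoc, Rinv_l, Rmult_1_r by lra.
apply (Rle_trans _ (Rabs p * Rabs g1 + Rabs q * Rabs g2)).
- rewrite <- !Rabs_mult. apply Rabs_triang.
- pose proof (Rabs_pos p). pose proof (Rabs_pos q).
  assert (Rabs p * Rabs g1 <= Rabs p * (c * s)) by (apply Rmult_le_compat_l; nra).
  assert (Rabs q * Rabs g2 <= Rabs q * (c * s)) by (apply Rmult_le_compat_l; nra).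
  nra.
Qed.

Lemma is_derive_sinh x : is_derive sinh x (cosh x).
Proof. apply is_derive_Reals, derivable_pt_lim_sinh. Qed.

Lemma is_derive_cosh x : is_derive cosh x (sinh x).
Proof. apply is_derive_Reals, derivable_pt_lim_cosh. Qed.

Lemma sinh_pos x : 0 < x -> 0 < sinh x.
Proof. intros Hx. rewrite <- sinh_0. now apply sinh_lt. Qed.

Lemma cosh_sqr x : cosh x ^ 2 = 1 + sinh x ^ 2.
Proof.
unfold cosh, sinh. rewrite exp_Ropp.
pose proof (exp_pos x). field. lra.
Qed.

Lemma cosh_ge_1 x : 1 <= cosh x.
Proof.
pose proof (cosh_sqr x). assert (0 < cosh x); [|nra].
unfold cosh. pose proof (exp_pos x). pose proof (exp_pos (- x)). lra.
Qed.

Lemma id_le_sinh x : 0 <= x -> x <= sinh x.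
Proof.
intros Hx. pose proof (le_add_mul_of_derive_ge sinh cosh 1 0 x Hx) as H.
rewrite sinh_0 in H. assert (0 + 1 * (x - 0) <= sinh x); [|lra]. apply H.
- intros t _. apply is_derive_sinh.
- intros t _. apply cosh_ge_1.
Qed.

Lemma cosh_le_2 x : 0 <= x <= 1 -> cosh x <= 2.
Proof.
intros Hx. pose proof (le_add_mul_of_derive_ge cosh sinh 0 x 1 (proj2 Hx)) as H.
assert (cosh x <= cosh 1).
{ assert (cosh x + 0 * (1 - x) <= cosh 1); [|lra]. apply H.
  - intros t _. apply is_derive_cosh.
  - intros t Ht. rewrite <- sinh_0. destruct (Req_dec t 0) as [->|]; [lra|].
    left. apply sinh_lt. lra. }
assert (exp (- (1)) < exp 0) by (apply exp_increasing; lra). rewrite exp_0 in *.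
pose proof exp_le_3. unfold cosh in *. lra.
Qed.

Lemma sinh_le_twice x : 0 <= x <= 1 -> sinh x <= 2 * x.
Proof.
intros Hx.
pose proof (le_add_mul_of_derive_ge (fun t => - sinh t) (fun t => - cosh t) (-2) 0 x (proj1 Hx)) as H.
cbv beta in H. rewrite sinh_0 in H. assert (- 0 + -2 * (x - 0) <= - sinh x); [|lra]. apply H.
- intros t _. pose proof (is_derive_sinh t). auto_derive_hyps. ring.
- intros t Ht. pose proof (cosh_le_2 t ltac:(lra)). lra.
Qed.

Lemma P_sinh x : x <> 0 -> P x = 1/4 + 3 / (4 * sinh x ^ 2).
Proof.
intros Hx. unfold P, sinh.
assert (E2 : exp (2 * x) = exp x * exp x) by (rewrite <- exp_plus; f_equal; ring).
assert (E4 : exp (4 * x) = (exp x * exp x) * (exp x * exp x))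
  by (rewrite <- !exp_plus; f_equal; ring).
assert (Hne : exp x * exp x <> 1).
{ rewrite <- E2, <- exp_0. intros He. apply exp_inv in He. lra. }
rewrite E2, E4, exp_Ropp. pose proof (exp_pos x).
assert (exp x - / exp x <> 0).
{ intros Hc. apply Hne. apply (Rmult_eq_reg_r (/ exp x)); [|apply Rinv_neq_0_compat; lra].
  field_simplify; lra. }
field. lra.
Qed.

Lemma P_pos x : 0 < x -> 0 < P x.
Proof.
intros Hx. rewrite P_sinh by lra. pose proof (sinh_pos x Hx).
assert (0 < 3 / (4 * sinh x ^ 2)) by (apply Rdiv_lt_0_compat; nra). lra.
Qed.

Lemma is_derive_P x : 0 < x -> is_derive P x (- 3 * cosh x / (2 * sinh x ^ 3)).
Proof.
intros Hx. apply (is_derive_ext_loc (fun t => 1/4 + 3 / (4 * sinh t ^ 2))).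
- apply (filter_imp (fun y => 0 < y)); [|now apply near_pos].
  intros y Hy. symmetry. apply P_sinh. lra.
- pose proof (sinh_pos x Hx). pose proof (is_derive_sinh x). auto_derive_hyps.
  + nra.
  + field. lra.
Qed.

(* With [y = sinh^(-1/2)], which solves [-y'' + P y = 0], these are [G = f / y]
   and the Wronskian [M = y f' - y' f]; hence [G' = M / y^2] and
   [M' = y (f'' - P f)]. *)
Definition liouville_G (f : R -> R) x := sqrt (sinh x) * f x.
Definition liouville_M (f f1 : R -> R) x :=
  f1 x / sqrt (sinh x) + cosh x * f x / (2 * sqrt (sinh x) ^ 3).

Lemma sqrt_sinh x : 0 < x -> 0 < sqrt (sinh x) /\ sqrt (sinh x) * sqrt (sinh x) = sinh x.
Proof.
intros Hx. pose proof (sinh_pos x Hx).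
split; [now apply sqrt_lt_R0|apply sqrt_sqrt; lra].
Qed.

Ltac sqrt_sinh_as q x :=
  let Hq0 := fresh "Hq0" in let Hq := fresh "Hq" in
  destruct (sqrt_sinh x) as [Hq0 Hq]; [lra|];
  set (q := sqrt (sinh x)) in *; clearbody q; try rewrite <- Hq in *.

Lemma is_derive_liouville_G (f f1 : R -> R) x : 0 < x -> is_derive f x (f1 x) ->
  is_derive (liouville_G f) x (sinh x * liouville_M f f1 x).
Proof.
intros Hx Hf. pose proof (is_derive_sinh x). pose proof (sinh_pos x Hx).
unfold liouville_G, liouville_M. auto_derive_hyps; [lra|].
sqrt_sinh_as q x. field. lra.
Qed.

Lemma is_derive_liouville_M (f f1 f2 : R -> R) x : 0 < x ->
  is_derive f x (f1 x) -> is_derive f1 x (f2 x) ->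
  is_derive (liouville_M f f1) x ((f2 x - P x * f x) / sqrt (sinh x)).
Proof.
intros Hx Hf Hf1. pose proof (is_derive_sinh x). pose proof (is_derive_cosh x).
pose proof (sinh_pos x Hx). pose proof (cosh_sqr x) as Hc.
rewrite (P_sinh x) by lra.
unfold liouville_M. auto_derive_hyps.
all: sqrt_sinh_as q x; try nra.
field_simplify; [|lra..]. rewrite Hc. field. lra.
Qed.

Lemma liouville_component_le a (f f1 : R -> R) C x : 0 < x <= /2 -> 0 <= C ->
  Rabs (liouville_G f x) <= C * x ^ 2 -> Rabs (liouville_M f f1 x) <= C ->
  f1 x ^ 2 + (Rabs a + P x) * f x ^ 2 <= (7 + Rabs a) * C ^ 2 * x.
Proof.
intros Hx HC HG HM.
pose proof (id_le_sinh x ltac:(lra)). pose proof (sinh_le_twice x ltac:(lra)).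
pose proof (cosh_ge_1 x). pose proof (cosh_le_2 x ltac:(lra)).
rewrite P_sinh by lra.
destruct (sqrt_sinh x (proj1 Hx)) as [Hq0 Hq].
apply sqr_le_of_Rabs_le in HG, HM.
assert (Hf : f x = liouville_G f x / sqrt (sinh x)) by (unfold liouville_G; field; lra).
assert (Hf1 : f1 x = sqrt (sinh x) * liouville_M f f1 x
                     - cosh x * liouville_G f x / (2 * sqrt (sinh x) ^ 3))
  by (unfold liouville_G, liouville_M; field; lra).
rewrite Hf, Hf1.
set (G := liouville_G f x) in *. set (N := liouville_M f f1 x) in *.
set (q := sqrt (sinh x)) in *. set (s := sinh x) in *. set (c := cosh x) in *.
clearbody G N q c s. subst s. clear Hf Hf1.
assert (Hx3 : C ^ 2 * x ^ 4 / x = C ^ 2 * x ^ 3) by (field; lra).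
assert (Hg : (G / q) ^ 2 <= C ^ 2 * x ^ 3).
{ replace ((G / q) ^ 2) with (G ^ 2 / (q * q)) by (field; lra). rewrite <- Hx3.
  apply Rmult_le_compat; try lra; [apply pow2_ge_0|left; apply Rinv_0_lt_compat; nra|].
  apply Rinv_le_contravar; lra. }
assert (Hh : (G / q) ^ 2 / (q * q) ^ 2 <= C ^ 2 * x).
{ replace (C ^ 2 * x) with (C ^ 2 * x ^ 3 / x ^ 2) by (field; lra).
  apply Rmult_le_compat; try lra; [apply pow2_ge_0|left; apply Rinv_0_lt_compat; nra|].
  apply Rinv_le_contravar; [nra|]. apply pow_incr. lra. }
assert (Hsplit : (q * N - c * G / (2 * q ^ 3)) ^ 2
                 <= 2 * ((q * q) * N ^ 2) + c ^ 2 / 2 * ((G / q) ^ 2 / (q * q) ^ 2)).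
{ replace (2 * ((q * q) * N ^ 2) + c ^ 2 / 2 * ((G / q) ^ 2 / (q * q) ^ 2))
    with (2 * (q * N) ^ 2 + 2 * (c * G / (2 * q ^ 3)) ^ 2) by (field; lra).
  pose proof (pow2_ge_0 (q * N + c * G / (2 * q ^ 3))). nra. }
set (g := (G / q) ^ 2) in *. set (h := g / (q * q) ^ 2) in *.
replace ((Rabs a + (1 / 4 + 3 / (4 * (q * q) ^ 2))) * g) with (Rabs a * g + g / 4 + 3 / 4 * h)
  by (unfold h; field; lra).
assert (0 <= g) by apply pow2_ge_0. assert (0 <= h) by (unfold h; apply Rdiv_le_0_compat; nra).
assert ((q * q) * N ^ 2 <= 2 * x * C ^ 2) by (apply Rmult_le_compat; nra).
assert (c ^ 2 / 2 * h <= 2 * (C ^ 2 * x)) by (apply Rmult_le_compat; nra).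
assert (g <= C ^ 2 * x) by (assert (x ^ 3 <= x) by nra; nra).
assert (Rabs a * g <= Rabs a * (C ^ 2 * x)) by (apply Rmult_le_compat_l; [apply Rabs_pos|lra]).
lra.
Qed.

Section Solution.

Variables (a b : R) (u v u1 v1 u2 v2 : R -> R).

Hypothesis solution : forall x, 0 < x ->
  is_derive u x (u1 x) /\ is_derive u1 x (u2 x) /\
  is_derive v x (v1 x) /\ is_derive v1 x (v2 x) /\
  u2 x = (P x - a) * u x + b * v x /\ v2 x = (P x - a) * v x - b * u x.

(* For [w = u + i v]: [rho = |w|^2] and [current = Im (conj w * w')]. *)
Definition rho x := u x ^ 2 + v x ^ 2.
Definition rho' x := 2 * (u x * u1 x + v x * v1 x).
Definition rho'' x := 2 * (u1 x ^ 2 + v1 x ^ 2) + 2 * (P x - a) * rho x.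
Definition current x := u x * v1 x - v x * u1 x.
Definition energy x := u1 x ^ 2 + v1 x ^ 2 + (a - P x) * rho x.

Lemma rho_ge_0 x : 0 <= rho x.
Proof. unfold rho. pose proof (pow2_ge_0 (u x)). pose proof (pow2_ge_0 (v x)). lra. Qed.

Lemma is_derive_rho x : 0 < x -> is_derive rho x (rho' x).
Proof.
intros Hx. destruct (solution x Hx) as (Hu & _ & Hv & _).
unfold rho, rho'. auto_derive_hyps. ring.
Qed.

Lemma is_derive_rho' x : 0 < x -> is_derive rho' x (rho'' x).
Proof.
intros Hx. destruct (solution x Hx) as (Hu & Hu1 & Hv & Hv1 & Eu & Ev).
unfold rho', rho'', rho. auto_derive_hyps. rewrite Eu, Ev. ring.
Qed.

Lemma is_derive_current x : 0 < x -> is_derive current x (- b * rho x).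
Proof.
intros Hx. destruct (solution x Hx) as (Hu & Hu1 & Hv & Hv1 & Eu & Ev).
unfold current, rho. auto_derive_hyps. rewrite Eu, Ev. ring.
Qed.

Lemma is_derive_energy x : 0 < x -> b = 0 ->
  is_derive energy x (3 * cosh x / (2 * sinh x ^ 3) * rho x).
Proof.
intros Hx ->. destruct (solution x Hx) as (Hu & Hu1 & Hv & Hv1 & Eu & Ev).
pose proof (is_derive_P x Hx). pose proof (sinh_pos x Hx).
unfold energy, rho. auto_derive_hyps. rewrite Eu, Ev. field. lra.
Qed.

Lemma continuous_rho x : 0 < x -> continuous rho x.
Proof.
intros Hx. apply (@ex_derive_continuous R_AbsRing R_NormedModule).
exists (rho' x). now apply is_derive_rho.
Qed.

Lemma RInt_rho_bounded : L2_pos u v ->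
  exists M, forall lo hi, 0 < lo -> lo <= hi -> RInt rho lo hi <= M.
Proof.
intros [M HM]. exists M. intros lo hi Hlo Hle.
assert (Hex : ex_RInt rho lo hi).
{ apply (@ex_RInt_continuous R_CompleteNormedModule). intros z Hz. apply continuous_rho.
  revert Hz. unfold Rmin. destruct (Rle_dec lo hi); lra. }
pose proof (ex_RInt_Reals_0 _ _ _ Hex) as pr.
rewrite (RInt_Reals _ _ _ pr). now apply HM.
Qed.

Local Notation Gu := (liouville_G u).
Local Notation Gv := (liouville_G v).
Local Notation Mu := (liouville_M u u1).
Local Notation Mv := (liouville_M v v1).

Lemma is_derive_Mu x : 0 < x -> is_derive Mu x ((b * Gv x - a * Gu x) / sinh x).
Proof.
intros Hx. destruct (solution x Hx) as (Hu & Hu1 & _ & _ & Eu & _).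
replace ((b * Gv x - a * Gu x) / sinh x) with ((u2 x - P x * u x) / sqrt (sinh x)).
- now apply is_derive_liouville_M.
- rewrite Eu. unfold liouville_G. sqrt_sinh_as q x. field. lra.
Qed.

Lemma is_derive_Mv x : 0 < x -> is_derive Mv x (- (a * Gv x + b * Gu x) / sinh x).
Proof.
intros Hx. destruct (solution x Hx) as (_ & _ & Hv & Hv1 & _ & Ev).
replace (- (a * Gv x + b * Gu x) / sinh x) with ((v2 x - P x * v x) / sqrt (sinh x)).
- now apply is_derive_liouville_M.
- rewrite Ev. unfold liouville_G. sqrt_sinh_as q x. field. lra.
Qed.

Lemma rho_liouville x : 0 < x -> rho x = (Gu x ^ 2 + Gv x ^ 2) / sinh x.
Proof.
intros Hx. unfold rho, liouville_G. sqrt_sinh_as q x. field. lra.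
Qed.

Lemma current_liouville x : 0 < x -> current x = Gu x * Mv x - Gv x * Mu x.
Proof.
intros Hx. unfold current, liouville_G, liouville_M. sqrt_sinh_as q x. field. lra.
Qed.

Variable Ibound : R.
Hypothesis rho_L2 : forall lo hi, 0 < lo -> lo <= hi -> RInt rho lo hi <= Ibound.

(* Otherwise [rho >= d / sinh t >= d / (2 t)] near [0], which is not integrable. *)
Lemma liouville_G_small x d : 0 < x <= /2 -> 0 < d ->
  exists y, 0 < y <= x /\ Gu y ^ 2 + Gv y ^ 2 <= d.
Proof.
intros Hx Hd. apply NNPP. intros Hn.
assert (Hbig : forall y, 0 < y <= x -> d < Gu y ^ 2 + Gv y ^ 2).
{ intros y Hy. apply Rnot_le_lt. intros Hc. apply Hn. now exists y. }
set (K := 2 * (Rabs Ibound + 1) / d).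
assert (HK : 0 < K) by (apply Rdiv_lt_0_compat; pose proof (Rabs_pos Ibound); lra).
set (y0 := x * exp (- K)).
assert (Hy0 : 0 < y0) by (apply Rmult_lt_0_compat; [lra|apply exp_pos]).
assert (Hy0x : y0 <= x).
{ assert (exp (- K) < exp 0) by (apply exp_increasing; lra). rewrite exp_0 in *.
  unfold y0. nra. }
assert (Hgrow : RInt rho y0 y0 - d / 2 * ln y0 <= RInt rho y0 x - d / 2 * ln x).
{ apply (le_of_derive_nonneg (fun t => RInt rho y0 t - d / 2 * ln t)
                             (fun t => rho t - d / 2 * / t)); [lra| |].
  - intros t Ht. apply (is_derive_minus (fun t => RInt rho y0 t) (fun t => d / 2 * ln t)).
    + apply is_derive_RInt_pos; [lra|lra|exact continuous_rho].
    + auto_derive; [lra|]. field. lra.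
  - intros t Ht. rewrite rho_liouville by lra.
    pose proof (sinh_pos t ltac:(lra)). pose proof (sinh_le_twice t ltac:(lra)).
    pose proof (Hbig t ltac:(lra)).
    assert (d / 2 * / t <= d / sinh t).
    { replace (d / 2 * / t) with (d / (2 * t)) by (field; lra).
      apply Rmult_le_compat_l; [lra|]. apply Rinv_le_contravar; lra. }
    assert (d / sinh t <= (Gu t ^ 2 + Gv t ^ 2) / sinh t)
      by (apply Rmult_le_compat_r; [left; apply Rinv_0_lt_compat|]; lra).
    lra. }
rewrite RInt_point in Hgrow.
assert (ln y0 = ln x - K) by (unfold y0; rewrite ln_mult, ln_exp by (lra || apply exp_pos); ring).
assert (d / 2 * K = Rabs Ibound + 1) by (unfold K; field; lra).
pose proof (rho_L2 y0 x Hy0 Hy0x). pose proof (Rle_abs Ibound).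
unfold zero in Hgrow; simpl in Hgrow. nra.
Qed.

(* [sqrt (1 + |M|^2)], a differentiable substitute for [|M|]. *)
Definition bracket_M t := sqrt (Mu t ^ 2 + Mv t ^ 2 + 1).

Lemma bracket_M_pos t : 0 < bracket_M t.
Proof. apply sqrt_lt_R0. nra. Qed.

Lemma Rabs_liouville_M_le_bracket t :
  Rabs (Mu t) <= bracket_M t /\ Rabs (Mv t) <= bracket_M t.
Proof.
assert (Hmu : bracket_M t ^ 2 = Mu t ^ 2 + Mv t ^ 2 + 1)
  by (unfold bracket_M; rewrite <- Rsqr_pow2; apply Rsqr_sqrt; nra).
pose proof (bracket_M_pos t). split; apply Rabs_le_of_sqr_le; nra.
Qed.

Lemma is_derive_bracket_M t : 0 < t ->
  is_derive bracket_M t (Derive bracket_M t) /\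
  Rabs (Derive bracket_M t) <= (Rabs a + Rabs b) / 2 * (/ sinh t + rho t).
Proof.
intros Ht. pose proof (sinh_pos t Ht). pose proof (bracket_M_pos t).
set (N := Mu t * (a * Gu t - b * Gv t) + Mv t * (a * Gv t + b * Gu t)).
assert (Hd : is_derive bracket_M t (- N / (sinh t * bracket_M t))).
{ pose proof (is_derive_Mu t Ht). pose proof (is_derive_Mv t Ht).
  unfold bracket_M. auto_derive_hyps; [nra|].
  replace (Mu t * (Mu t * 1) + Mv t * (Mv t * 1) + 1) with (Mu t ^ 2 + Mv t ^ 2 + 1) by ring.
  fold (bracket_M t). unfold N. field. lra. }
rewrite (is_derive_unique _ _ _ Hd). split; [exact Hd|].
pose proof (Rabs_dot_cmul_le (Mu t) (Mv t) a b (Gu t) (Gv t)) as HN. fold N (bracket_M t) in HN.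
rewrite rho_liouville by lra.
unfold Rdiv. rewrite Rabs_mult, Rabs_Ropp, (Rabs_pos_eq (/ (sinh t * bracket_M t)))
  by (left; apply Rinv_0_lt_compat; nra).
apply (Rle_trans _ (bracket_M t * (Rabs a + Rabs b) * ((1 + Gu t ^ 2 + Gv t ^ 2) / 2)
                    * / (sinh t * bracket_M t))).
- apply Rmult_le_compat_r; [left; apply Rinv_0_lt_compat; nra|exact HN].
- right. field. lra.
Qed.

Lemma bracket_M_le x : 0 < x <= /2 ->
  bracket_M x
  <= bracket_M (/2) + (Rabs a + Rabs b) / 4 * / x + (Rabs a + Rabs b) / 2 * Rabs Ibound.
Proof.
intros Hx. set (L := Rabs a + Rabs b).
assert (HL : 0 <= L) by (unfold L; pose proof (Rabs_pos a); pose proof (Rabs_pos b); lra).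
set (I := fun t => RInt rho (/2) t).
assert (HI : forall t, 0 < t -> is_derive I t (rho t))
  by (intros t Ht; apply is_derive_RInt_pos; [lra|lra|exact continuous_rho]).
assert (HI2 : I (/2) = 0) by (unfold I; now rewrite RInt_point).
assert (HIx : - Rabs Ibound <= I x).
{ unfold I. rewrite <- (opp_RInt_swap rho).
  - pose proof (rho_L2 x (/2) (proj1 Hx) (proj2 Hx)). pose proof (Rle_abs Ibound).
    unfold opp; simpl. lra.
  - apply (@ex_RInt_continuous R_CompleteNormedModule). intros z Hz. apply continuous_rho.
    revert Hz. unfold Rmin. destruct (Rle_dec x (/2)); lra. }
clearbody I.
assert (Hlip : Rabs (bracket_M (/2) - bracket_M x)
               <= (- L / 4 * / (/2) + L / 2 * I (/2)) - (- L / 4 * / x + L / 2 * I x)).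
{ apply (Rabs_sub_le_of_derive bracket_M (Derive bracket_M)
           (fun t => - L / 4 * / t + L / 2 * I t) (fun t => L / 4 * / t ^ 2 + L / 2 * rho t));
    [lra|].
  intros t Ht. assert (Ht0 : 0 < t) by lra.
  destruct (is_derive_bracket_M t Ht0) as [Hmu Hmu_le]. fold L in Hmu_le.
  split; [exact Hmu|split].
  - pose proof (HI t Ht0). auto_derive_hyps; [lra|]. field. lra.
  - pose proof (sinh_pos t Ht0). pose proof (id_le_sinh t ltac:(lra)).
    assert (/ sinh t <= / 2 * / t ^ 2).
    { apply (Rle_trans _ (/ t)); [apply Rinv_le_contravar; lra|].
      apply (Rmult_le_reg_r (2 * t ^ 2)); [nra|]. field_simplify; lra. }
    apply (Rle_trans _ _ _ Hmu_le).
    assert (L / 2 * / sinh t <= L / 2 * (/ 2 * / t ^ 2)) by (apply Rmult_le_compat_l; lra).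
    replace (L / 4 * / t ^ 2) with (L / 2 * (/ 2 * / t ^ 2)) by (field; lra).
    lra. }
rewrite HI2 in Hlip. apply Rabs_le_between in Hlip.
replace (- L / 4 * / (/2)) with (- L / 2) in Hlip by field.
assert (L / 2 * - Rabs Ibound <= L / 2 * I x) by (apply Rmult_le_compat_l; lra).
nra.
Qed.

Lemma sinh_bracket_M_bounded :
  exists C, 0 <= C /\ forall t, 0 < t <= /2 -> sinh t * bracket_M t <= C.
Proof.
set (L := Rabs a + Rabs b).
assert (HL : 0 <= L) by (unfold L; pose proof (Rabs_pos a); pose proof (Rabs_pos b); lra).
exists (bracket_M (/2) + L / 2 + L * Rabs Ibound).
pose proof (bracket_M_pos (/2)). pose proof (Rabs_pos Ibound).
split; [nra|]. intros t Ht.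
pose proof (bracket_M_le t Ht) as Hmu. fold L in Hmu.
pose proof (sinh_pos t (proj1 Ht)). pose proof (sinh_le_twice t ltac:(lra)).
apply (Rle_trans _ (sinh t * (bracket_M (/2) + L / 4 * / t + L / 2 * Rabs Ibound)));
  [apply Rmult_le_compat_l; lra|].
assert (sinh t * (L / 4 * / t) <= L / 2).
{ replace (sinh t * (L / 4 * / t)) with (L / 4 * (sinh t / t)) by (field; lra).
  assert (sinh t / t <= 2) by (apply Rle_div_l; lra). nra. }
assert (sinh t <= 1) by lra.
assert (sinh t * bracket_M (/2) <= 1 * bracket_M (/2)) by (apply Rmult_le_compat_r; lra).
assert (0 <= L / 2 * Rabs Ibound) by nra.
assert (sinh t * (L / 2 * Rabs Ibound) <= 1 * (L / 2 * Rabs Ibound))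
  by (apply Rmult_le_compat_r; lra).
nra.
Qed.

Lemma liouville_G_le (h dh : R -> R) x : 0 < x <= /2 ->
  (forall t, 0 < t <= x -> is_derive h t (dh t) /\ 0 <= h t /\
     sinh t * Rabs (Mu t) <= dh t /\ sinh t * Rabs (Mv t) <= dh t) ->
  Rabs (Gu x) <= h x /\ Rabs (Gv x) <= h x.
Proof.
intros Hx Hh.
assert (Hsmall : forall d, 0 < d -> exists y, 0 < y <= x /\ Rabs (Gu y) <= d /\ Rabs (Gv y) <= d).
{ intros d Hd. destruct (liouville_G_small x (d ^ 2) Hx ltac:(nra)) as [y [Hy HG]].
  exists y. split; [exact Hy|]. split; apply Rabs_le_of_sqr_le; nra. }
split.
- apply (Rabs_le_of_derive_from_0 _ (fun t => sinh t * Mu t) h dh).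
  + intros d Hd. destruct (Hsmall d Hd) as [y (? & ? & _)]. now exists y.
  + intros t Ht. destruct (solution t (proj1 Ht)) as (Hu & _).
    destruct (Hh t Ht) as (? & ? & ? & _). pose proof (sinh_pos t (proj1 Ht)).
    rewrite Rabs_mult, Rabs_pos_eq by lra.
    split; [now apply is_derive_liouville_G|tauto].
- apply (Rabs_le_of_derive_from_0 _ (fun t => sinh t * Mv t) h dh).
  + intros d Hd. destruct (Hsmall d Hd) as [y (? & _ & ?)]. now exists y.
  + intros t Ht. destruct (solution t (proj1 Ht)) as (_ & _ & Hv & _).
    destruct (Hh t Ht) as (? & ? & _ & ?). pose proof (sinh_pos t (proj1 Ht)).
    rewrite Rabs_mult, Rabs_pos_eq by lra.
    split; [now apply is_derive_liouville_G|tauto].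
Qed.

Lemma liouville_G_O_x : exists C, 0 <= C /\
  forall x, 0 < x <= /2 -> Rabs (Gu x) <= C * x /\ Rabs (Gv x) <= C * x.
Proof.
destruct sinh_bracket_M_bounded as [C [HC Hmu]]. exists C. split; [exact HC|].
intros x Hx. apply (liouville_G_le (fun t => C * t) (fun _ => C) x Hx).
intros t Ht. pose proof (Hmu t ltac:(lra)). pose proof (sinh_pos t (proj1 Ht)).
destruct (Rabs_liouville_M_le_bracket t).
split; [auto_derive; auto; ring|split; [nra|split; nra]].
Qed.

Lemma liouville_M_bounded : exists C, 0 <= C /\
  forall x, 0 < x <= /2 -> Rabs (Mu x) <= C /\ Rabs (Mv x) <= C.
Proof.
destruct liouville_G_O_x as [C1 [HC1 HG]].
set (L := Rabs a + Rabs b).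
assert (HL : 0 <= L) by (unfold L; pose proof (Rabs_pos a); pose proof (Rabs_pos b); lra).
exists (Rabs (Mu (/2)) + Rabs (Mv (/2)) + L * C1).
pose proof (Rabs_pos (Mu (/2))). pose proof (Rabs_pos (Mv (/2))).
assert (HLC : 0 <= L * C1) by nra.
split; [nra|]. intros x Hx.
assert (Hlip : forall (f df : R -> R), (forall t, 0 < t -> is_derive f t (df t)) ->
          (forall t, 0 < t <= /2 -> Rabs (df t) <= L * C1) ->
          Rabs (f (/2) - f x) <= L * C1).
{ intros f df Hd Hb.
  apply (Rle_trans _ (L * C1 * (/2) - L * C1 * x)); [|nra].
  apply (Rabs_sub_le_of_derive f df (fun t => L * C1 * t) (fun _ => L * C1)); [lra|].
  intros t Ht. split; [apply Hd; lra|split; [auto_derive; auto; ring|apply Hb; lra]]. }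
assert (HMu := Hlip _ _ is_derive_Mu). assert (HMv := Hlip _ _ is_derive_Mv).
assert (Hd : forall p q t, 0 < t <= /2 ->
          Rabs ((p * Gu t + q * Gv t) / sinh t) <= (Rabs p + Rabs q) * C1).
{ intros p q t Ht. pose proof (id_le_sinh t ltac:(lra)).
  destruct (HG t Ht). now apply (Rabs_lincomb_div_le _ _ _ _ _ t). }
assert (HMu' : Rabs (Mu (/2) - Mu x) <= L * C1).
{ apply HMu. intros t Ht.
  replace ((b * Gv t - a * Gu t) / sinh t) with ((- a * Gu t + b * Gv t) / sinh t)
    by (unfold Rdiv; ring).
  pose proof (Hd (- a) b t Ht). now rewrite Rabs_Ropp in *. }
assert (HMv' : Rabs (Mv (/2) - Mv x) <= L * C1).
{ apply HMv. intros t Ht.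
  replace (- (a * Gv t + b * Gu t) / sinh t) with ((- b * Gu t + - a * Gv t) / sinh t)
    by (unfold Rdiv; ring).
  pose proof (Hd (- b) (- a) t Ht). rewrite !Rabs_Ropp in *. unfold L. lra. }
rewrite Rabs_minus_sym in HMu', HMv'.
pose proof (Rabs_triang_inv (Mu x) (Mu (/2))). pose proof (Rabs_triang_inv (Mv x) (Mv (/2))).
split; lra.
Qed.

Lemma liouville_G_O_x2 : exists C, 0 <= C /\ forall x, 0 < x <= /2 ->
  Rabs (Gu x) <= C * x ^ 2 /\ Rabs (Gv x) <= C * x ^ 2 /\ Rabs (Mu x) <= C /\ Rabs (Mv x) <= C.
Proof.
destruct liouville_M_bounded as [C [HC HM]]. exists C. split; [exact HC|].
intros x Hx.
assert (Rabs (Gu x) <= C * x ^ 2 /\ Rabs (Gv x) <= C * x ^ 2).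
{ apply (liouville_G_le (fun t => C * t ^ 2) (fun t => 2 * C * t) x Hx).
  intros t Ht. destruct (HM t ltac:(lra)).
  pose proof (sinh_pos t (proj1 Ht)). pose proof (sinh_le_twice t ltac:(lra)).
  split; [auto_derive; auto; ring|split; [nra|split; nra]]. }
pose proof (HM x Hx). tauto.
Qed.

Lemma current_energy_O_x : exists K, forall x, 0 < x <= /2 ->
  Rabs (current x) <= K * x /\ Rabs (energy x) <= K * x.
Proof.
destruct liouville_G_O_x2 as [C [HC HGM]].
exists ((14 + 2 * Rabs a) * C ^ 2). intros x Hx.
destruct (HGM x Hx) as (HGu & HGv & HMu & HMv).
pose proof (Rabs_pos a). pose proof (pow2_ge_0 C).
split.
- rewrite current_liouville by lra.
  apply (Rle_trans _ (Rabs (Gu x * Mv x) + Rabs (Gv x * Mu x))).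
  { unfold Rminus. rewrite <- (Rabs_Ropp (Gv x * Mu x)). apply Rabs_triang. }
  rewrite !Rabs_mult.
  assert (Rabs (Gu x) * Rabs (Mv x) <= C * x ^ 2 * C)
    by (apply Rmult_le_compat; auto; apply Rabs_pos).
  assert (Rabs (Gv x) * Rabs (Mu x) <= C * x ^ 2 * C)
    by (apply Rmult_le_compat; auto; apply Rabs_pos).
  assert (C ^ 2 * x ^ 2 <= C ^ 2 * x) by (apply Rmult_le_compat_l; nra).
  nra.
- pose proof (liouville_component_le a u u1 C x Hx HC HGu HMu).
  pose proof (liouville_component_le a v v1 C x Hx HC HGv HMv).
  pose proof (P_pos x (proj1 Hx)).
  pose proof (pow2_ge_0 (u x)). pose proof (pow2_ge_0 (v x)).
  pose proof (pow2_ge_0 (u1 x)). pose proof (pow2_ge_0 (v1 x)).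
  unfold energy, rho. apply Rabs_le_between.
  assert (Hr : Rabs ((a - P x) * (u x ^ 2 + v x ^ 2)) <= (Rabs a + P x) * (u x ^ 2 + v x ^ 2)).
  { rewrite Rabs_mult, (Rabs_pos_eq (u x ^ 2 + v x ^ 2)) by lra.
    apply Rmult_le_compat_r; [lra|].
    apply (Rle_trans _ _ _ (Rabs_triang _ _)). rewrite Rabs_Ropp, (Rabs_pos_eq (P x)); lra. }
  apply Rabs_le_between in Hr. nra.
Qed.

Lemma not_rho''_ge x e K : 0 < x -> 0 < e -> 0 <= K ->
  ~ (forall t, x <= t -> e - K * rho t <= rho'' t).
Proof.
intros Hx He HK Hge.
apply (RInt_unbounded_of_D2_ge rho rho' rho'' x e K Ibound Hx He HK continuous_rho).
- intros t Ht. split; [apply is_derive_rho; lra|split; [apply is_derive_rho'; lra|]].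
  split; [apply rho_ge_0|auto].
- intros X HX. apply rho_L2; lra.
Qed.

Lemma rho''_ge_energy x : 0 < x -> 2 * energy x - 4 * Rabs a * rho x <= rho'' x.
Proof.
intros Hx. pose proof (P_pos x Hx). pose proof (Rle_abs a). pose proof (rho_ge_0 x).
assert (- Rabs a * rho x <= (P x - a) * rho x) by (apply Rmult_le_compat_r; lra).
unfold rho'', energy. lra.
Qed.

Lemma rho''_ge_current x c : 0 < x -> 0 <= c <= Rabs (current x) ->
  4 * c - (2 + 2 * Rabs a) * rho x <= rho'' x.
Proof.
intros Hx Hc. pose proof (P_pos x Hx). pose proof (Rle_abs a). pose proof (rho_ge_0 x).
assert (HJ : c ^ 2 <= current x ^ 2) by (rewrite <- (pow2_abs (current x)); apply pow_incr; lra).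
assert (Hcs : current x ^ 2 <= rho x * (u1 x ^ 2 + v1 x ^ 2)).
{ unfold current, rho. pose proof (pow2_ge_0 (u x * u1 x + v x * v1 x)). nra. }
assert (HW : 2 * c <= u1 x ^ 2 + v1 x ^ 2 + rho x).
{ pose proof (pow2_ge_0 (u1 x)). pose proof (pow2_ge_0 (v1 x)).
  pose proof (pow2_ge_0 (u1 x ^ 2 + v1 x ^ 2 - rho x)). nra. }
assert (- Rabs a * rho x <= (P x - a) * rho x) by (apply Rmult_le_compat_r; lra).
unfold rho''. lra.
Qed.

Lemma rho_eq_0_of_vanishing (f c : R -> R) :
  (forall x, 0 < x -> is_derive f x (c x * rho x)) -> (forall x, 0 < x -> c x <> 0) ->
  (forall x, 0 < x -> f x = 0) -> forall x, 0 < x -> rho x = 0.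
Proof.
intros Hd Hc Hf x Hx.
pose proof (derive_eq_0_of_vanishing f x _ Hx Hf (Hd x Hx)) as H0.
apply Rmult_integral in H0. destruct H0; [now destruct (Hc x Hx)|auto].
Qed.

Lemma rho_eq_0_real : b = 0 -> forall x, 0 < x -> rho x = 0.
Proof.
intros Hb. destruct current_energy_O_x as [K HK].
set (c := fun t => 3 * cosh t / (2 * sinh t ^ 3)).
assert (Hc : forall t, 0 < t -> 0 < c t).
{ intros t Ht. pose proof (sinh_pos t Ht). pose proof (cosh_ge_1 t).
  apply Rdiv_lt_0_compat; [lra|]. assert (0 < sinh t ^ 3) by (apply pow_lt; lra). lra. }
assert (Hmon : forall p q, 0 < p <= q -> energy p <= energy q).
{ intros p q Hpq. apply (le_of_derive_nonneg energy (fun t => c t * rho t)); [lra| |].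
  - intros t Ht. apply is_derive_energy; [lra|exact Hb].
  - intros t Ht. pose proof (Hc t ltac:(lra)). pose proof (rho_ge_0 t). nra. }
assert (Hge : forall x, 0 < x -> 0 <= energy x).
{ intros x Hx.
  enough (- energy x <= 0) by lra.
  apply (nonpos_of_nonincreasing_O (fun t => - energy t) K); [| |exact Hx].
  - intros p q Hpq. pose proof (Hmon p q Hpq). lra.
  - intros t Ht. rewrite Rabs_Ropp. now apply HK. }
assert (Hle : forall x, 0 < x -> energy x <= 0).
{ intros x Hx. apply Rnot_lt_le. intros Hpos.
  apply (not_rho''_ge x (2 * energy x) (4 * Rabs a) Hx); [lra|pose proof (Rabs_pos a); lra|].
  intros t Ht. pose proof (Hmon x t (conj Hx Ht)). pose proof (rho''_ge_energy t ltac:(lra)).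
  nra. }
apply (rho_eq_0_of_vanishing energy c).
- intros x Hx. now apply is_derive_energy.
- intros x Hx. pose proof (Hc x Hx). lra.
- intros x Hx. apply Rle_antisym; [now apply Hle|now apply Hge].
Qed.

Lemma rho_eq_0_nonreal : b <> 0 -> forall x, 0 < x -> rho x = 0.
Proof.
intros Hb. destruct current_energy_O_x as [K HK].
assert (Hb0 : 0 < Rabs b) by now apply Rabs_pos_lt.
set (Q := fun t => b * current t).
assert (HQ : forall t, 0 < t -> is_derive Q t (- b ^ 2 * rho t)).
{ intros t Ht. pose proof (is_derive_current t Ht). unfold Q. auto_derive_hyps. ring. }
assert (Hmon : forall p q, 0 < p <= q -> Q q <= Q p).
{ intros p q Hpq. enough (- Q p <= - Q q) by lra.
  apply (le_of_derive_nonneg (fun t => - Q t) (fun t => b ^ 2 * rho t)); [lra| |].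
  - intros t Ht. pose proof (HQ t ltac:(lra)). auto_derive_hyps. ring.
  - intros t Ht. pose proof (pow2_ge_0 b). pose proof (rho_ge_0 t). nra. }
assert (Hle : forall x, 0 < x -> Q x <= 0).
{ apply (nonpos_of_nonincreasing_O Q (Rabs b * K) Hmon).
  intros t Ht. unfold Q. rewrite Rabs_mult, Rmult_assoc.
  apply Rmult_le_compat_l; [lra|]. now apply HK. }
assert (Hge : forall x, 0 < x -> 0 <= Q x).
{ intros x Hx. apply Rnot_lt_le. intros Hneg.
  set (c := - Q x / Rabs b).
  assert (Hc : 0 < c) by (apply Rdiv_lt_0_compat; lra).
  apply (not_rho''_ge x (4 * c) (2 + 2 * Rabs a) Hx); [lra|pose proof (Rabs_pos a); lra|].
  intros t Ht. apply rho''_ge_current; [lra|split; [lra|]].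
  pose proof (Hmon x t (conj Hx Ht)).
  apply (Rmult_le_reg_l (Rabs b)); [lra|]. rewrite <- Rabs_mult.
  replace (Rabs b * c) with (- Q x) by (unfold c; field; lra).
  apply (Rle_trans _ (- (b * current t))); [unfold Q in *; lra|].
  rewrite <- Rabs_Ropp. apply Rle_abs. }
apply (rho_eq_0_of_vanishing Q (fun _ => - b ^ 2)).
- exact HQ.
- intros x _. pose proof (pow2_gt_0 b Hb). lra.
- intros x Hx. apply Rle_antisym; [now apply Hle|now apply Hge].
Qed.

Lemma rho_eq_0 x : 0 < x -> rho x = 0.
Proof.
destruct (Req_dec b 0) as [Hb|Hb]; [now apply rho_eq_0_real|now apply rho_eq_0_nonreal].
Qed.

End Solution.

Theorem theoremA1 :
  forall (a b : R) (u v u1 v1 u2 v2 : R -> R),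
    (forall x, 0 < x ->
       derivable_pt_lim u x (u1 x) /\ derivable_pt_lim u1 x (u2 x) /\
       derivable_pt_lim v x (v1 x) /\ derivable_pt_lim v1 x (v2 x) /\
       - u2 x + P x * u x = a * u x - b * v x /\
       - v2 x + P x * v x = a * v x + b * u x) ->
    L2_pos u v ->
    forall x, 0 < x -> u x = 0 /\ v x = 0.
Proof.
intros a b u v u1 v1 u2 v2 Hsol HL2 x Hx.
assert (Hsol' : forall x, 0 < x ->
  is_derive u x (u1 x) /\ is_derive u1 x (u2 x) /\
  is_derive v x (v1 x) /\ is_derive v1 x (v2 x) /\
  u2 x = (P x - a) * u x + b * v x /\ v2 x = (P x - a) * v x - b * u x).
{ intros y Hy. destruct (Hsol y Hy) as (H1 & H2 & H3 & H4 & H5 & H6).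
  rewrite !is_derive_Reals. repeat split; auto; lra. }
destruct (RInt_rho_bounded a b u v u1 v1 u2 v2 Hsol' HL2) as [M HM].
pose proof (rho_eq_0 a b u v u1 v1 u2 v2 Hsol' M HM x Hx) as H0. unfold rho in H0.
pose proof (pow2_ge_0 (u x)). pose proof (pow2_ge_0 (v x)).
split; nra.
Qed.
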